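(* Let $\Delta>0$, $\sigma_m>0$ and $\rho_m\in(-1,1)$. Let $(x_m,w_m)$ be a pair of real random variables with joint probability density $$f(x_m,w_m)=\frac{1}{2\pi\sigma_m^2\sqrt{1-\rho_m^2}}\exp\!\left(-\frac{x_m^2+w_m^2-2\rho_m x_m w_m}{2\sigma_m^2(1-\rho_m^2)}\right),$$ and define $$k_m=\frac{|x_m-w_m|}{\Delta^2\left(1+\frac{(x_m+w_m)^2}{4\Delta^2}\right)^{3/2}}.$$ Then $$E\{k_m\}=\int_{-\infty}^{\infty}\int_{-\infty}^{\infty} k_m\, f(x_m,w_m)\,\mathrm{d}x_m\,\mathrm{d}w_m=\frac{4}{\pi\Delta}\sqrt{\frac{1-\rho_m}{1+\rho_m}}\int_0^{\infty}\frac{1}{(1+\eta^2)^{3/2}}\exp\!\left(-\frac{\Delta^2}{\sigma_m^2(1+\rho_m)}\eta^2\right)\mathrm{d}\eta .$$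
   Context: Setting: a signal $(y_1,\dots,y_N)$ sampled at equally spaced points with spacing $\Delta$; for $m=2,\dots,N-1$, $x_m=y_{m+1}-y_m$ and $w_m=y_m-y_{m-1}$ are modeled as jointly Gaussian, zero mean, each with variance $\sigma_m^2$ and correlation coefficient $\rho_m=\mathrm{Cov}\{x_m,w_m\}/\sigma_m^2$. The quantity $k_m$ is the finite-difference approximation at the $m$-th sample of the curvature $|y''|/(1+y'^2)^{3/2}$ of the signal. *)

From HB Require Import structures.
From mathcomp Require Import all_boot all_order all_algebra.
From mathcomp Require Import all_classical all_reals all_analysis.
Set Implicit Arguments. Unset Strict Implicit. Unset Printing Implicit Defensive.
Import Order.TTheory GRing.Theory Num.Theory.
Local Open Scope ring_scope.

Definition bigauss_density {R : realType} (s r : R) (z : R * R) : R :=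
  let x := z.1 in let w := z.2 in
  (2 * pi * s ^+ 2 * Num.sqrt (1 - r ^+ 2))^-1 *
  expR (- ((x ^+ 2 + w ^+ 2 - 2 * r * x * w) / (2 * s ^+ 2 * (1 - r ^+ 2)))).

Definition curv_k {R : realType} (D : R) (z : R * R) : R :=
  let x := z.1 in let w := z.2 in
  `|x - w| / (D ^+ 2 * powR (1 + (x + w) ^+ 2 / (4 * D ^+ 2)) (3 / 2)).

From HB Require Import structures.
From mathcomp Require Import all_boot all_order all_algebra.
From mathcomp Require Import all_classical all_reals all_analysis measurable_realfun.
From mathcomp Require Import ring.
Import Order.TTheory GRing.Theory Num.Theory.
Import numFieldNormedType.Exports.
Local Open Scope ring_scope.
Local Open Scope classical_set_scope.

(* In the rotated coordinates u = x - w, v = x + w the Gaussian exponent separates into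
   u^2 / (4 s^2 (1 - r)) + v^2 / (4 s^2 (1 + r)), while k_m depends only on |u| and v.
   So the integrand is a product f(u) g(v), and since the rotation has Jacobian 1/2 the
   double integral is (1/2) (int f) (int g).  The u-integral is the elementary
   int |u| exp(-a u^2) du = 1/a; the substitution v = 2 D eta and the evenness of the
   v-integrand turn the v-integral into the half-line integral of the statement. *)

Section correlation.
Context {R : rcfType} {r : R}.
Hypotheses (hr1 : -1 < r) (hr2 : r < 1).

Let r1 : 0 < 1 - r. Proof. by rewrite subr_gt0. Qed.
Let r2 : 0 < 1 + r. Proof. by rewrite -ltrBlDl sub0r. Qed.
Let subr_sqr : 1 - r ^+ 2 = (1 - r) * (1 + r). Proof. by ring. Qed.

Lemma sqrt_1Br2_gt0 : 0 < Num.sqrt (1 - r ^+ 2).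
Proof. by rewrite sqrtr_gt0 subr_sqr mulr_gt0. Qed.

Lemma sqrt_ratio_1Br_1Dr :
  (1 - r) / Num.sqrt (1 - r ^+ 2) = Num.sqrt ((1 - r) / (1 + r)).
Proof.
rewrite subr_sqr !sqrtrM ?sqrtrV ?(ltW r1) ?(ltW r2) // -{1}(sqr_sqrtr (ltW r1)).
have q1 : Num.sqrt (1 - r) != 0 by rewrite gt_eqF // sqrtr_gt0.
have q2 : Num.sqrt (1 + r) != 0 by rewrite gt_eqF // sqrtr_gt0.
by field; rewrite q1 q2.
Qed.

End correlation.

Section real_line.
Context {R : realType}.
Local Notation mu := (@lebesgue_measure R).

Lemma cvgy_affine (c d : R) : 0 < c -> (c * x + d) @[x --> +oo] --> +oo.
Proof.
move=> c0; apply: (cvg_comp (fun x => c * x) (fun y => y + d)).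
  exact: gt0_cvgMry cvg_id.
exact: cvg_addrr.
Qed.

Lemma cvgNy_affine (c d : R) : 0 < c -> (c * x + d) @[x --> -oo] --> -oo.
Proof.
move=> c0; apply: (cvg_comp (fun x => c * x) (fun y => y + d)).
  exact: gt0_cvgMrNy cvg_id.
exact: cvg_addrr_Ny.
Qed.

Lemma derive1_affine (c d : R) : (fun x : R => c * x + d)^`() = cst c.
Proof. by apply/funext => x; rewrite derive1E derive_val /= addr0; exact: mulr1. Qed.

Lemma ge0_integral_affine (G : R -> R) (c d : R) : 0 < c -> continuous G ->
  (forall x, 0 <= G x) ->
  (\int[mu]_x (G x)%:E = c%:E * \int[mu]_x (G (c * x + d))%:E)%E.
Proof.
move=> c0 cG G0.
rewrite (@increasing_ge0_integration_by_substitutionT _ (fun x => c * x + d) G) //;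
  rewrite ?derive1_affine; last 6 first.
- by move=> x y xy; rewrite ltrD2r ltr_pM2l.
- exact: cst_continuous.
- exact: is_cvg_cst.
- exact: is_cvg_cst.
- exact: cvgNy_affine.
- exact: cvgy_affine.
rewrite -ge0_integralZl_EFin //; last 3 first.
- by move=> x _; rewrite lee_fin.
- apply/measurable_EFinP/measurableT_comp; first exact: continuous_measurable_fun.
  exact: measurable_funD.
- exact: ltW.
by apply: eq_integral => x _; rewrite /= mulrC.
Qed.

Lemma continuous_gauss (a : R) : continuous (fun x : R => expR (- a * x ^+ 2)).
Proof.
move=> x; apply: continuous_comp; last exact: continuous_expR.
by apply: cvgM; [exact: cvg_cst | exact: exprn_continuous].
Qed.

Lemma integral0y_mul_gauss (a : R) : 0 < a ->
  (\int[mu]_(x in `[0%R, +oo[) (x * expR (- a * x ^+ 2))%:E = ((2 * a)^-1)%:E)%E.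
Proof.
move=> a0.
pose F (x : R) := - (2 * a)^-1 * expR (- a * x ^+ 2).
have dF (x : R) : is_derive x 1 F (x * expR (- a * x ^+ 2)).
  have dexp : is_derive x 1 (fun x => - a * x ^+ 2) (- a * (2 * x)).
    by apply: is_derive_eq; rewrite /GRing.scale /=; ring.
  have dexpR := is_derive1_comp (is_derive_expR _) dexp.
  apply: is_derive_eq; rewrite /GRing.scale /=; field; exact: lt0r_neq0.
have F0 : F x @[x --> +oo] --> 0.
  rewrite -(mulr0 (- (2 * a)^-1)); apply: cvgM; first exact: cvg_cst.
  under eq_fun do rewrite mulNr.
  apply: (cvg_comp (fun x => a * x ^+ 2) (fun y => expR (- y))).
    exact: gt0_cvgMry cvgr_expr2.
  exact: cvgr_expR.
rewrite (ge0_continuous_FTC2y _ _ F0).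
- by rewrite /F expr0n /= mulr0 expR0 mulr1 add0e opprK.
- by move=> x x0; rewrite mulr_ge0 // expR_ge0.
- apply: continuous_subspaceT => x; apply: cvgM; first exact: cvg_id.
  exact: continuous_gauss.
- by move=> x _; exact: ex_derive.
- apply: cvg_at_right_filter; apply: cvgM; first exact: cvg_cst.
  exact: continuous_gauss.
- by move=> x _; rewrite derive1E derive_val.
Qed.

Lemma continuous_comp_divr (G : R -> R) (c : R) : continuous G ->
  continuous (fun x : R => G (x / c)).
Proof.
move=> cG x; apply: (@continuous_comp _ _ _ (fun x : R => x / c) G); last exact: cG.
by apply: cvgM; [exact: cvg_id | exact: cvg_cst].
Qed.

Lemma ge0_integral_dilate (G : R -> R) (c : R) : 0 < c -> continuous G ->
  (forall x, 0 <= G x) ->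
  (\int[mu]_x (G (x / c))%:E = c%:E * \int[mu]_x (G x)%:E)%E.
Proof.
move=> c0 cG G0; rewrite (@ge0_integral_affine (fun x => G (x / c)) c 0) //.
- by congr (_ * _)%E; apply: eq_integral => x _; rewrite addr0 mulrAC divff ?mul1r // gt_eqF.
- exact: continuous_comp_divr.
Qed.

Definition abs_gauss (a u : R) := `|u| * expR (- a * u ^+ 2).

Lemma abs_gauss_ge0 (a u : R) : 0 <= abs_gauss a u.
Proof. by rewrite mulr_ge0 ?expR_ge0. Qed.

Lemma continuous_abs_gauss (a : R) : continuous (abs_gauss a).
Proof. by move=> u; apply: cvgM; [exact: norm_continuous | exact: continuous_gauss]. Qed.

Lemma integral_abs_gauss (a : R) : 0 < a ->
  (\int[mu]_u (abs_gauss a u)%:E = (a^-1)%:E)%E.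
Proof.
move=> a0; rewrite ge0_symfun_integralT; last 3 first.
- exact: abs_gauss_ge0.
- exact: continuous_abs_gauss.
- by move=> u; rewrite /abs_gauss /= normrN sqrrN.
rewrite -set_itvcy; under eq_integral => u.
  rewrite inE /= in_itv /= andbT => u0; rewrite /abs_gauss ger0_norm //; over.
by rewrite integral0y_mul_gauss // -EFinM invfM mulrA divff ?div1r.
Qed.

Lemma integralZl_abs_gauss (k a : R) : 0 <= k -> 0 < a ->
  (\int[mu]_u (k * abs_gauss a u)%:E = (k / a)%:E)%E.
Proof.
move=> k0 a0; under eq_integral do rewrite EFinM.
rewrite ge0_integralZl_EFin //.
- by rewrite integral_abs_gauss // -EFinM.
- by move=> u _; rewrite lee_fin abs_gauss_ge0.
- by apply/measurable_EFinP; exact: continuous_measurable_fun (continuous_abs_gauss a).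
Qed.

End real_line.

Section rotation.
Context {R : realType}.
Local Notation mu := (@lebesgue_measure R).
Variables f g : R -> R.
Hypotheses (cf : continuous f) (cg : continuous g).
Hypotheses (f0 : forall u, 0 <= f u) (g0 : forall v, 0 <= g v).

Let mf : measurable_fun setT f := continuous_measurable_fun cf.
Let mg : measurable_fun setT g := continuous_measurable_fun cg.

Lemma ge0_integral_rotation :
  (\int[mu \x mu]_(z in [set: R * R]) (f (z.1 - z.2) * g (z.1 + z.2))%:E =
   (2^-1)%:E * \int[mu]_u (f u)%:E * \int[mu]_v (g v)%:E)%E.
Proof.
have m_rot : measurable_fun [set: measurableTypeR R * measurableTypeR R]
    (fun z : measurableTypeR R * measurableTypeR R => (f (z.1 - z.2) * g (z.1 + z.2))%:E).
  apply/measurable_EFinP; apply: measurable_funM.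
  - by apply: measurableT_comp mf _; apply: measurable_funB.
  - by apply: measurableT_comp mg _; apply: measurable_funD.
rewrite (fubini_tonelli1 _ m_rot) /fubini_F /=; last by move=> z; rewrite lee_fin mulr_ge0.
transitivity (\int[mu]_x \int[mu]_t (f (2 * x - t) * g t)%:E)%E.
  apply: eq_integral => x _.
  rewrite (@ge0_integral_affine _ (fun w => f (x - w) * g (x + w)) 1 (- x) ltr01);
    first last.
  - by move=> w; rewrite mulr_ge0.
  - move=> w; apply: cvgM.
    + apply: (@continuous_comp _ _ _ (fun w => x - w) f); last exact: cf.
      by apply: cvgB; [exact: cvg_cst | exact: cvg_id].
    + apply: (@continuous_comp _ _ _ (fun w => x + w) g); last exact: cg.
      by apply: cvgD; [exact: cvg_cst | exact: cvg_id].
  rewrite mul1e; apply: eq_integral => t _; congr (EFin (f _ * g _)); ring.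
have m_shear : measurable_fun [set: measurableTypeR R * measurableTypeR R]
    (fun z : measurableTypeR R * measurableTypeR R => (f (2 * z.1 - z.2) * g z.2)%:E).
  apply/measurable_EFinP; apply: measurable_funM.
  - by apply: measurableT_comp mf _; apply: measurable_funB => //; apply: measurable_funM.
  - exact: measurableT_comp mg _.
rewrite (fubini_tonelli _ m_shear) /=; last by move=> z; rewrite lee_fin mulr_ge0.
transitivity (\int[mu]_t ((2^-1)%:E * \int[mu]_u (f u)%:E * (g t)%:E))%E.
  apply: eq_integral => t _.
  have h2 : 0 < 2^-1 :> R by rewrite invr_gt0.
  rewrite (@ge0_integral_affine _ (fun x => f (2 * x - t) * g t) (2^-1) (t / 2) h2);
    first last.
  - by move=> x; rewrite mulr_ge0.
  - move=> x; apply: cvgM; last exact: cvg_cst.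
    apply: (@continuous_comp _ _ _ (fun x : R => 2 * x - t) f); last exact: cf.
    by apply: cvgB; [apply: cvgM; [exact: cvg_cst | exact: cvg_id] | exact: cvg_cst].
  rewrite -muleA; congr (_ * _)%E.
  rewrite -ge0_integralZr //.
  - by apply: eq_integral => u _; rewrite -EFinM; congr (EFin (f _ * _)); field.
  - exact/measurable_EFinP.
  - by move=> u _; rewrite lee_fin.
  - by rewrite lee_fin.
apply: ge0_integralZl => //.
- exact/measurable_EFinP.
- by move=> t _; rewrite lee_fin.
- by rewrite mule_ge0 // integral_ge0 // => u _; rewrite lee_fin.
Qed.

End rotation.

Section curvature.
Context {R : realType}.

Definition curv_profile (c eta : R) :=
  (powR (1 + eta ^+ 2) (3 / 2))^-1 * expR (- c * eta ^+ 2).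

Lemma curv_profile_ge0 (c eta : R) : 0 <= curv_profile c eta.
Proof. by rewrite mulr_ge0 ?expR_ge0 // invr_ge0 powR_ge0. Qed.

Lemma curv_profileN (c eta : R) : curv_profile c (- eta) = curv_profile c eta.
Proof. by rewrite /curv_profile sqrrN. Qed.

Lemma continuous_curv_profile (c : R) : continuous (curv_profile c).
Proof.
move=> eta; apply: cvgM; last exact: continuous_gauss.
have pos : 0 < 1 + eta ^+ 2 by rewrite ltr_pwDl ?sqr_ge0.
apply: (@continuousV _ _ (fun eta : R => powR (1 + eta ^+ 2) (3 / 2))).
  by rewrite gt_eqF // powR_gt0.
apply: (@continuous_comp _ _ _ (fun eta : R => 1 + eta ^+ 2) (fun x : R => powR x (3 / 2))).
  by apply: cvgD; [exact: cvg_cst | exact: exprn_continuous].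
apply/differentiable_continuous/derivable1_diffP.
have dpow := is_derive1_powR (3 / 2) pos; exact: ex_derive.
Qed.

Lemma curv_k_bigauss_densityE (D s r : R) (z : R * R) :
  D != 0 -> s != 0 -> -1 < r -> r < 1 ->
  curv_k D z * bigauss_density s r z =
  (2 * pi * s ^+ 2 * Num.sqrt (1 - r ^+ 2) * D ^+ 2)^-1 *
    abs_gauss ((4 * s ^+ 2 * (1 - r))^-1) (z.1 - z.2) *
  curv_profile (D ^+ 2 / (s ^+ 2 * (1 + r))) ((z.1 + z.2) / (2 * D)).
Proof.
move=> D0 s0 hr1 hr2; case: z => x w /=.
have r1 : 1 - r != 0 by rewrite subr_eq0 gt_eqF.
have r2 : 1 + r != 0 by rewrite gt_eqF // -ltrBlDl sub0r.
have r12 : 1 - r ^+ 2 = (1 - r) * (1 + r) by ring.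
have sqrt0 := gt_eqF (sqrt_1Br2_gt0 hr1 hr2).
have pi0 : pi != 0 :> R by rewrite gt_eqF // pi_gt0.
rewrite /curv_k /bigauss_density /abs_gauss /curv_profile /=.
have -> : (x + w) ^+ 2 / (4 * D ^+ 2) = ((x + w) / (2 * D)) ^+ 2 by field.
set p := powR _ _; have p0 : p != 0 by rewrite gt_eqF // powR_gt0 // ltr_pwDl ?sqr_ge0.
(* The quadratic form diagonalises in the rotated coordinates x - w and x + w. *)
rewrite (_ : - ((x ^+ 2 + w ^+ 2 - 2 * r * x * w) / _) =
  - (4 * s ^+ 2 * (1 - r))^-1 * (x - w) ^+ 2 +
  - (D ^+ 2 / (s ^+ 2 * (1 + r))) * ((x + w) / (2 * D)) ^+ 2); last first.
  by field; rewrite r1 r2 r12 mulf_neq0 // D0 s0.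
(* Generalising [pi] keeps [field] from unfolding its definition. *)
rewrite expRD; move: (@pi R) pi0 => q q0.
by field; rewrite D0 s0 sqrt0 q0 p0.
Qed.

End curvature.

Theorem proposition1 (R : realType) (D s r : R)
  (hD : 0 < D) (hs : 0 < s) (hr1 : -1 < r) (hr2 : r < 1) :
  (\int[(@lebesgue_measure R) \x (@lebesgue_measure R)]_(z in [set: R * R])
      (curv_k D z * bigauss_density s r z)%:E
   = (4 / (pi * D) * Num.sqrt ((1 - r) / (1 + r)))%:E *
     \int[@lebesgue_measure R]_(eta in `[0%R, +oo[%classic)
       ((powR (1 + eta ^+ 2) (3 / 2))^-1 *
        expR (- (D ^+ 2 / (s ^+ 2 * (1 + r))) * eta ^+ 2))%:E)%E.
Proof.
have [D0 s0] : D != 0 /\ s != 0 by rewrite !gt_eqF.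
pose a := (4 * s ^+ 2 * (1 - r))^-1.
pose c := D ^+ 2 / (s ^+ 2 * (1 + r)).
pose K := (2 * pi * s ^+ 2 * Num.sqrt (1 - r ^+ 2) * D ^+ 2)^-1.
have a_gt0 : 0 < a by rewrite invr_gt0 !mulr_gt0 ?exprn_gt0 // subr_gt0.
have K_ge0 : 0 <= K by rewrite invr_ge0 !mulr_ge0 ?sqrtr_ge0 ?pi_ge0 ?ltW.
have D2_gt0 : 0 < 2 * D by rewrite mulr_gt0.
under eq_integral do rewrite (curv_k_bigauss_densityE _ _ _ _ D0 s0 hr1 hr2).
rewrite (@ge0_integral_rotation R (fun u => K * abs_gauss a u)
                                  (fun v => curv_profile c (v / (2 * D)))); last 4 first.
- by move=> u; apply: cvgM; [exact: cvg_cst | exact: continuous_abs_gauss].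
- exact/continuous_comp_divr/continuous_curv_profile.
- by move=> u; rewrite mulr_ge0 ?abs_gauss_ge0.
- by move=> v; exact: curv_profile_ge0.
rewrite integralZl_abs_gauss //.
rewrite (ge0_integral_dilate _ _ D2_gt0 (continuous_curv_profile c) (curv_profile_ge0 c)).
rewrite (ge0_symfun_integralT (curv_profile_ge0 c) (continuous_curv_profile c)); last first.
  by move=> eta; rewrite /= curv_profileN.
rewrite -set_itvcy !muleA -!EFinM; congr (EFin _ * _)%E.
rewrite -(sqrt_ratio_1Br_1Dr hr1 hr2) /K /a; move: (@pi R) (@pi_gt0 R) => q q0.
by field; rewrite D0 s0 (gt_eqF q0) subr_eq0 (gt_eqF hr2) (gt_eqF (sqrt_1Br2_gt0 hr1 hr2)).
Qed.
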